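(* Let $m$ be a positive integer and $a,b\in\mathbb{F}_{2^{3m}}^*$. Put $A=a^{2^{2m}+2^m+1}+1$ and $B=a^{2^{2m}}b^{2^m}+a^{2^{2m}+2^m}b+b^{2^{2m}}$. Then the equation $x^{2^m}+ax+b=0$ (in $x\in\mathbb{F}_{2^{3m}}$): (i) has at most one solution, namely possibly $x=B/A$, when $A\neq 0$; (ii) has exactly $2^m$ solutions when $A=0$ and $B=0$; (iii) has no solutions when $A=0$ and $B\neq 0$. *)

From HB Require Import structures.
From mathcomp Require Import all_boot all_order all_algebra all_field.
Set Implicit Arguments. Unset Strict Implicit. Unset Printing Implicit Defensive.

From HB Require Import structures.
From mathcomp Require Import all_boot all_order all_algebra all_field.
From mathcomp Require Import zify ring.
Import GRing.Theory.
Set Implicit Arguments. Unset Strict Implicit. Unset Printing Implicit Defensive.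
Local Open Scope ring_scope.

(* Let q = 2^m and let F be a field with q^3 elements, so that y^(q^3) = y.
   The map L(x) = x^q + a x is additive (Frobenius in characteristic 2), and
   the equation reads L(x) = b.  Iterating x^q = a x + L(x) three times and
   using x^(q^3) = x yields the key identity

       A * x = R_a(L(x)),    R_a(c) = a^(q^2) c^q + a^(q^2+q) c + c^(q^2),

   with A = a^(q^2+q+1) + 1 (lemma resolvent_linearized); note B = R_a(b).
   If A <> 0 every solution equals B/A, and if A = 0 but B <> 0 there is none.
   If A = 0, the image of L lies among the roots of R_a, a polynomial of degree
   q^2, while the kernel of L consists of roots of X^q + aX.  Since
   #F = #(image L) * #(kernel L) = q^3, both bounds are attained: the image of
   L is exactly the root set of R_a, so B = 0 puts b in the image, and the
   solution set is a coset of the kernel, of size q. *)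

Lemma exprD_pow2 (R : comNzRingType) (k : nat) (x y : R) :
  2 \in [pchar R] -> (x + y) ^+ (2 ^ k) = x ^+ (2 ^ k) + y ^+ (2 ^ k).
Proof.
move=> char2; apply: exprDn_pchar.
by rewrite (eq_pnat _ (pcharf_eq char2)) pnatX pnat_id.
Qed.

Section LinearizedEquation.
Variables (F : fieldType) (k : nat).
Hypothesis char2 : 2 \in [pchar F].
Local Notation q := (2 ^ k)%N.

Definition linearized (a x : F) : F := x ^+ q + a * x.

(* The polynomial R_a whose roots contain the image of linearized a when
   a^(q^2+q+1) = 1. *)
Definition resolvent (a c : F) : F :=
  a ^+ (q ^ 2) * c ^+ q + a ^+ (q ^ 2 + q) * c + c ^+ (q ^ 2).

Lemma linearizedD (a : F) : {morph linearized a : x y / x + y}.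
Proof. by move=> x y; rewrite /linearized exprD_pow2 // mulrDr addrACA. Qed.

Lemma linearized_eqE (a b x : F) :
  (x ^+ q + a * x + b == 0) = (linearized a x == b).
Proof. by rewrite addr_eq0 oppr_pchar2. Qed.

Hypothesis frob_cube : forall y : F, y ^+ (q ^ 3) = y.

(* The key identity, obtained by iterating x^q = a x + L(x) three times. *)
Lemma resolvent_linearized (a x : F) :
  (a ^+ (q ^ 2 + q + 1) + 1) * x = resolvent a (linearized a x).
Proof.
set c := linearized a x.
have x1 : x ^+ q = a * x + c by rewrite /c /linearized addrCA addrr_pchar2 ?addr0.
have x2 : x ^+ (q ^ 2) = a ^+ q * (a * x + c) + c ^+ q.
  by rewrite -mulnn exprM x1 exprD_pow2 // exprMn x1.
have x3 : x = a ^+ (q ^ 2 + q + 1) * x + resolvent a c.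
  rewrite -{1}(frob_cube x) expnSr exprM x2 exprD_pow2 // exprMn.
  rewrite exprD_pow2 // exprMn x1 -!exprM mulnn /resolvent !exprD expr1.
  ring.
by rewrite mulrDl mul1r {2}x3 addrA addrr_pchar2 // add0r.
Qed.

End LinearizedEquation.

Lemma card_roots_lt (R : finIdomainType) (p : {poly R}) (P : {pred R}) :
  p != 0 -> {in P, forall x, root p x} -> (#|P| < size p)%N.
Proof.
move=> p_neq0 P_roots; rewrite cardE.
apply: max_poly_roots p_neq0 _ (enum_uniq P).
by apply/allP => x; rewrite mem_enum => /P_roots.
Qed.

Section AdditiveFibers.
Variables (U V : finZmodType) (f : U -> V).
Hypothesis fD : {morph f : x y / x + y}.

(* Every fiber of an additive map is a translate of its kernel. *)
Lemma card_additive_fiber (x0 : U) :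
  #|[set x | f x == f x0]| = #|[set x | f x == 0]|.
Proof.
have fB x : f (x - x0) = f x - f x0.
  by apply/eqP; rewrite eq_sym subr_eq -fD subrK.
rewrite -[RHS](card_imset _ (addIr x0)); apply: eq_card => x; rewrite inE.
apply/eqP/imsetP => [fx | [y]].
  by exists (x - x0); rewrite ?subrK // inE fB fx subrr.
by rewrite inE => /eqP fy ->; rewrite fD fy add0r.
Qed.

Lemma card_additive_image_kernel :
  #|U| = (#|[set f x | x in U]| * #|[set x | f x == 0%R]|)%N.
Proof.
rewrite -[#|U|]sum1_card (partition_big f (mem [set f x | x in U])) /=; last first.
  by move=> x _; apply: imset_f.
rewrite -sum_nat_const; apply: eq_bigr => _ /imsetP [x0 _ ->].
rewrite sum1dep_card -(card_additive_fiber x0).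
by apply: eq_card => x; rewrite !inE.
Qed.

End AdditiveFibers.

Lemma mul_squeeze (i j M N : nat) :
  (0 < M)%N -> (0 < N)%N -> (i <= M)%N -> (j <= N)%N -> (i * j)%N = (M * N)%N ->
  i = M /\ j = N.
Proof. move=> M_gt0 N_gt0 iM jN ijMN; split; nia. Qed.

Section FiniteField.
Variables (F : finFieldType) (k : nat).
Hypothesis k_gt0 : (0 < k)%N.
Hypothesis cardF : #|F| = ((2 ^ k) ^ 3)%N.
Local Notation q := (2 ^ k)%N.

Lemma q_gt1 : (1 < q)%N.
Proof. by rewrite -[1%N](expn0 2) ltn_exp2l. Qed.

Lemma char2_of_card : 2 \in [pchar F].
Proof. by apply: (card_finPcharP (n := (k * 3)%N)); rewrite // expnM. Qed.

Lemma frob_cube_of_card (y : F) : y ^+ (q ^ 3) = y.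
Proof. by rewrite -cardF expf_card. Qed.

(* The kernel of L consists of roots of X^q + a X. *)
Lemma card_kernel_linearized (a : F) :
  (#|[set x | linearized k a x == 0%R]| <= q)%N.
Proof.
have size_p : size ('X^q + a *: 'X : {poly F}) = q.+1.
  rewrite size_polyDl size_polyXn //.
  by apply: leq_ltn_trans (size_scale_leq _ _) _; rewrite size_polyX; exact: q_gt1.
rewrite -ltnS -size_p; apply: card_roots_lt => [|x].
  by rewrite -size_poly_eq0 size_p.
by rewrite inE /root !hornerE.
Qed.

(* R_a is a polynomial of degree q^2. *)
Lemma card_resolvent_roots (a : F) :
  (#|[set c | resolvent k a c == 0%R]| <= q ^ 2)%N.
Proof.
pose p : {poly F} := 'X^(q ^ 2) + (a ^+ (q ^ 2) *: 'X^q + a ^+ (q ^ 2 + q) *: 'X).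
have size_p : size p = (q ^ 2).+1.
  have q_lt_q2 : (q < q ^ 2)%N.
    by rewrite -mulnn; apply: ltn_Pmull; [exact: q_gt1 | exact: ltnW q_gt1].
  rewrite size_polyDl size_polyXn //; apply: leq_ltn_trans (size_polyD _ _) _.
  rewrite gtn_max; apply/andP; split; apply: leq_ltn_trans (size_scale_leq _ _) _.
    by rewrite size_polyXn ltnS.
  by rewrite size_polyX ltnS (leq_trans q_gt1) // ltnW.
rewrite -ltnS -size_p; apply: card_roots_lt => [|c].
  by rewrite -size_poly_eq0 size_p.
rewrite inE /root => /eqP <-; apply/eqP.
by rewrite /p /resolvent !hornerD !hornerZ !hornerXn hornerX addrC.
Qed.

Lemma linearized_image_kernel (a : F) : a ^+ (q ^ 2 + q + 1) + 1 = 0 ->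
  #|[set x | linearized k a x == 0%R]| = q /\
  [set linearized k a x | x in F] = [set c | resolvent k a c == 0%R].
Proof.
move=> A0.
have im_sub : [set linearized k a x | x in F] \subset [set c | resolvent k a c == 0].
  apply/subsetP => _ /imsetP [x _ ->].
  by rewrite inE -(resolvent_linearized char2_of_card frob_cube_of_card) A0 mul0r.
have [im_card ker_card] : #|[set linearized k a x | x in F]| = (q ^ 2)%N /\
                          #|[set x | linearized k a x == 0%R]| = q.
  apply: mul_squeeze; rewrite ?expn_gt0 //.
  - exact: leq_trans (subset_leq_card im_sub) (card_resolvent_roots a).
  - exact: card_kernel_linearized.
  rewrite -card_additive_image_kernel ?cardF -?expnSr //.
  exact: linearizedD char2_of_card a.
split=> //; apply/eqP; rewrite eqEcard im_sub im_card.
exact: card_resolvent_roots.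
Qed.

End FiniteField.

Theorem lemma6 (F : finFieldType) (m : nat) (hm : (0 < m)%N)
  (hcard : #|F| = (2 ^ (3 * m))%N) (a b : F) (ha : a != 0) (hb : b != 0) :
  let A := a ^+ (2 ^ (2 * m) + 2 ^ m + 1) + 1 in
  let B := a ^+ (2 ^ (2 * m)) * b ^+ (2 ^ m) + a ^+ (2 ^ (2 * m) + 2 ^ m) * b
           + b ^+ (2 ^ (2 * m)) in
  let S := [set x : F | x ^+ (2 ^ m) + a * x + b == 0] in
  [/\ A != 0 -> S \subset [set B / A],
      A = 0 -> B = 0 -> #|S| = (2 ^ m)%N
    & A = 0 -> B != 0 -> S = set0].
Proof.
move=> A B S.
have sqE : (2 ^ (2 * m) = (2 ^ m) ^ 2)%N by rewrite mulnC expnM.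
have cardF : #|F| = ((2 ^ m) ^ 3)%N by rewrite hcard mulnC expnM.
have char2 := char2_of_card cardF.
have AE : A = a ^+ ((2 ^ m) ^ 2 + 2 ^ m + 1) + 1 by rewrite /A sqE.
have BE : B = resolvent m a b by rewrite /B /resolvent sqE.
have solE x : (x \in S) = (linearized m a x == b) by rewrite inE linearized_eqE.
have AxB x : x \in S -> A * x = B.
  by rewrite solE AE BE => /eqP <-; apply/resolvent_linearized/frob_cube_of_card.
split=> [A_neq0 | A0 B0 | A0 B_neq0].
- by apply/subsetP => x /AxB Ax; rewrite inE -Ax mulrC mulKf.
- rewrite AE in A0; have [ker_card imE] := linearized_image_kernel hm cardF A0.
  have /imsetP [x0 _ bE] : b \in [set linearized m a x | x in F].
    by rewrite imE inE -BE B0.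
  have -> : S = [set x | linearized m a x == linearized m a x0].
    by apply/setP => x; rewrite solE inE bE.
  by rewrite card_additive_fiber ?ker_card //; exact: linearizedD.
- apply/setP => x; rewrite in_set0; apply/negP => /AxB.
  by rewrite A0 mul0r => B0; rewrite -B0 eqxx in B_neq0.
Qed.
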